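(* Consider the family of Slim Fly networks with $u=0$ (equivalently, $q=4w$ is a prime power, i.e. $q=2^m$ with $m\ge 2$), laid out with the subgroup layout, with concentration $p=\lfloor k'/2\rfloor+\kappa$ for a fixed integer constant $\kappa$, and with fixed positive constants $b$, $|VC|$, $L$, $H$. Let $N=N_r\,p$ be the number of nodes, $M$ the average wire length, and $\Delta=\Delta_{eb}$ the total edge-buffer size (all defined below). Then, as $q\to\infty$, $$M=\Theta\!\left(\sqrt[3]{N}\right)\qquad\text{and}\qquad \Delta=\Theta\!\left(N\sqrt[3]{N}\right).$$
   Context: Slim Fly graph (MMS graph). Let $q$ be a prime power with $q=4w+u$, $w\in\mathbb{N}$, $u\in\{-1,0,1\}$; here $u=0$. Let $\mathbb{F}_q$ be the finite field with $q$ elements and $\xi$ a primitive element (every nonzero element is a power of $\xi$). For $u=0$ define the generator sets $X=\{1,\xi^2,\xi^4,\dots,\xi^{q-2}\}$ and $X'=\{\xi,\xi^3,\dots,\xi^{q-1}\}$. The routers are labeled $[G|a,b]$ with $G\in\{0,1\}$ and $a,b\in\mathbb{F}_q$ (identified with $\{1,\dots,q\}$ via a fixed bijection), so there are $N_r=2q^2$ routers. Routers are connected as follows: $[0|a,b]\sim[0|a,b']$ iff $b-b'\in X$; $[1|m,c]\sim[1|m,c']$ iff $c-c'\in X'$; $[0|a,b]\sim[1|m,c]$ iff $b=ma+c$ (arithmetic in $\mathbb{F}_q$). Each router then has network radix $k'=(3q-u)/2=3q/2$. Each router has $p$ attached nodes, so $N=N_r p=2q^2p$. Subgroup layout. Routers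 are placed on a 2D integer grid: router $[G|a,b]$ (with $a,b\in\{1,\dots,q\}$) is placed at coordinates $(x,y)=(b,\,2a-(1-G))$, giving a $q\times 2q$ rectangle. Index the routers $1,\dots,N_r$ and let $\varepsilon_{ij}=1$ if routers $i,j$ are connected and $0$ otherwise. Average wire length: $M=\dfrac{\sum_{i=1}^{N_r}\sum_{j=1}^{N_r}\varepsilon_{ij}(|x_i-x_j|+|y_i-y_j|)}{\sum_{i=1}^{N_r}\sum_{j=1}^{N_r}\varepsilon_{ij}}$. Total edge-buffer size: $\Delta_{eb}=\sum_{i=1}^{N_r}\sum_{j=1}^{N_r}\varepsilon_{ij}\,\delta_{ij}$, where $\delta_{ij}=T_{ij}\,b\,|VC|/L$ and $T_{ij}=2\left\lceil (|x_i-x_j|+|y_i-y_j|)/H\right\rceil+3$; here $b$ (link bandwidth), $|VC|$ (virtual channels per link), $L$ (flit size) and $H$ (grid hops traversed per link cycle, $H\ge 1$) are fixed positive constants independent of $q$. *)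

From HB Require Import structures.
From mathcomp Require Import all_boot all_order all_algebra all_field.
From mathcomp Require Import all_classical all_reals all_analysis.
Set Implicit Arguments. Unset Strict Implicit. Unset Printing Implicit Defensive.
Import Order.TTheory GRing.Theory Num.Theory.
Local Open Scope ring_scope.

Section SlimFly.
Variable F : finFieldType.
Variable xi : F.

Definition primitive_elt : Prop := forall x : F, x != 0 -> exists k : nat, x = xi ^+ k.

Definition SF_X : {set F} := [set xi ^+ (2 * i) | i : 'I_(#|F| %/ 2)].
Definition SF_X' : {set F} := [set xi ^+ (2 * i + 1) | i : 'I_(#|F| %/ 2)].

(* Router [G|a,b] is encoded as (G, a, b) with G = false for 0 and true for 1. *)
Definition router := (bool * F * F)%type.

Definition sf_adj (r s : router) : bool :=
  match r, s with
  | (false, a, b), (false, a', b') => (a == a') && (b - b' \in SF_X)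
  | (true, m, c), (true, m', c') => (m == m') && (c - c' \in SF_X')
  | (false, a, b), (true, m, c) => b == m * a + c
  | (true, m, c), (false, a, b) => b == m * a + c
  end.

Variable R : realType.
Variable sigma : F -> nat.

Definition xcoord (r : router) : R := (sigma r.2)%:R.
Definition ycoord (r : router) : R :=
  2 * (sigma r.1.2)%:R - (if r.1.1 then 0 else 1).

Definition wdist (r s : router) : R :=
  `|xcoord r - xcoord s| + `|ycoord r - ycoord s|.

Definition eps (r s : router) : R := (sf_adj r s)%:R.

Definition avg_wire_length : R :=
  (\sum_(r : router) \sum_(s : router) eps r s * wdist r s) /
  (\sum_(r : router) \sum_(s : router) eps r s).

Definition T_link (H : R) (r s : router) : R :=
  2 * (Num.ceil (wdist r s / H))%:~R + 3.

Definition edge_buffer_total (b VC L H : R) : R :=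
  \sum_(r : router) \sum_(s : router) eps r s * (T_link H r s * b * VC / L).

(* k' = (3q - u)/2 with u = 0; p = floor(k'/2) + kappa; N = N_r * p = 2 q^2 p *)
Definition netradix : nat := (3 * #|F|) %/ 2.
Definition concentration (kappa : int) : int := ((netradix %/ 2)%N)%:Z + kappa.
Definition num_nodes (kappa : int) : R :=
  (#|[set: router]|)%:R * (concentration kappa)%:~R.

End SlimFly.

(* Write q = #|F|.  The average wire length is M = W / D, where W is the total
   wire length (sum of eps r s * dist r s) and D the number of directed links
   (sum of eps r s).  Both are compared with powers of q:
   - the layout fits in a q x 2q rectangle, so every wire has length <= 3q and
     W <= 3q D; every router has at most 2q neighbours, so D <= 4 q^3;
   - a group-0 router [0|a,b] is joined to exactly one router [1|m,_] for each m,
     at vertical distance >= |sigma a - sigma m|; as sigma is injective these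
     distances add up to at least k (q - 2k) for every k, hence W >= q^4/8;
   - a link of length w needs between 2w/H and 2w + 5 buffer cycles, so Delta_eb
     lies between (2K/H) W and 11 q K D, where K = b |VC| / L.
   When q = 4k and |kappa| <= k the node count N lies in [q^3, 2 q^3], hence
   N^(1/3) lies in [q, 2q], which gives explicit constants for both estimates
   (avg_wire_length_theta, edge_buffer_theta).  The main theorem applies them with
   q = 2^m and k = 2^(m-2) for every m >= |kappa| + 2. *)

From HB Require Import structures.
From mathcomp Require Import all_boot all_order all_algebra all_field.
From mathcomp Require Import all_classical all_reals all_analysis.
From mathcomp Require Import ring lra zify.
Import Order.TTheory GRing.Theory Num.Theory.
Local Open Scope ring_scope.
Set Implicit Arguments. Unset Strict Implicit. Unset Printing Implicit Defensive.

Lemma card_near_injective (T : finType) (s : T -> nat) (c k : nat) :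
  injective s -> (#|[set t | (s t < c + k)%N && (c < s t + k)%N]| <= 2 * k)%N.
Proof.
move=> s_inj; rewrite cardE -(size_map s) -(size_iota (c - k) (2 * k)).
apply: uniq_leq_size; first by rewrite (map_inj_uniq s_inj) enum_uniq.
move=> x /mapP[t]; rewrite mem_enum inE => /andP[lt_c lt_t] ->.
by rewrite mem_iota; apply/andP; split; lia.
Qed.

Lemma sum_dist_injective (R : realDomainType) (T : finType) (s : T -> nat) (c k : nat) :
  injective s -> k%:R * (#|T|%:R - 2 * k%:R) <= \sum_(t : T) `|(s t)%:R - c%:R : R|.
Proof.
move=> s_inj; pose S := [set t | (s t < c + k)%N && (c < s t + k)%N].
have far t : t \in ~: S -> k%:R <= `|(s t)%:R - c%:R : R|.
  have k_ge0 := ler0n R k; rewrite !inE negb_and -!leqNgt => /orP[] le_k.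
  - have : ((c + k)%:R <= (s t)%:R :> R) by rewrite ler_nat.
    by rewrite natrD => ?; rewrite ger0_norm; lra.
  - have : ((s t + k)%:R <= c%:R :> R) by rewrite ler_nat.
    by rewrite natrD => ?; rewrite ler0_norm; lra.
have card_far : (#|T|%:R - 2 * k%:R : R) <= #|~: S|%:R.
  have := card_near_injective c k s_inj; rewrite -/S -(ler_nat R) natrM.
  by rewrite -(cardsC S) natrD; lra.
rewrite (bigID (mem (~: S))) /= ler_wpDr ?sumr_ge0 //.
apply: le_trans (ler_sum _ (fun t => far t)).
rewrite sumr_const -[_ *+ _]mulr_natr; have := ler0n R k; nra.
Qed.

(* The layout puts group 0 on odd rows and group 1 on even rows: rows 2i - 1 and
   2j are at least |i - j| apart. *)
Lemma row_dist_ge (R : realDomainType) (i j : nat) :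
  `|i%:R - j%:R : R| <= `|2 * i%:R - 1 - 2 * j%:R : R|.
Proof.
have [le_ij | lt_ji] := leqP i j.
- have : (i%:R <= j%:R :> R) by rewrite ler_nat.
  by move=> ?; rewrite !ler0_norm; lra.
- have : (j.+1%:R <= i%:R :> R) by rewrite ler_nat.
  by rewrite -addn1 natrD => ?; rewrite !ger0_norm; lra.
Qed.

Lemma dist_le_length (R : realDomainType) (x y K : R) :
  0 <= x <= K -> 0 <= y <= K -> `|x - y| <= K.
Proof. by move=> /andP[? ?] /andP[? ?]; rewrite ler_norml; apply/andP; split; lra. Qed.

Lemma sum_graph_indicator (R : nzSemiRingType) (T U : finType) (f : T -> U) :
  \sum_(x : T) \sum_(y : U) ((y == f x)%:R : R) = #|T|%:R.
Proof.
have one x : \sum_(y : U) ((y == f x)%:R : R) = 1.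
  by rewrite (bigD1 (f x)) //= eqxx big1 ?addr0 // => y /negbTE ->.
by rewrite (eq_bigr _ (fun x _ => one x)) sumr_const.
Qed.

Lemma ler_indicator (R : numDomainType) (P Q : bool) : (P -> Q) -> (P%:R : R) <= Q%:R.
Proof. by case: P; case: Q => // /(_ isT). Qed.

Lemma sum_router (R : nmodType) (F : finFieldType) (f : router F -> R) :
  \sum_(r : router F) f r = \sum_(G : bool) \sum_(a : F) \sum_(b : F) f (G, a, b).
Proof. by rewrite pair_bigA /= pair_bigA /=; apply: eq_bigr => -[[G a] b]. Qed.

Section SlimFlyWires.
Variables (F : finFieldType) (xi : F) (R : realType) (sigma : F -> nat).
Hypothesis sigma_inj : injective sigma.
Hypothesis sigma_range : forall x : F, (1 <= sigma x <= #|F|)%N.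

Local Notation q := (#|F|%:R : R).
Local Notation link := (eps xi R).
Local Notation dist := (wdist R sigma).

Definition wire_total : R := \sum_(r : router F) \sum_(s : router F) link r s * dist r s.
Definition link_total : R := \sum_(r : router F) \sum_(s : router F) link r s.

Lemma card_ge1 : 1 <= q.
Proof. by rewrite ler1n; apply/card_gt0P; exists 0. Qed.

Lemma link_ge0 r s : 0 <= link r s.
Proof. exact: ler0n. Qed.

Lemma dist_ge0 r s : 0 <= dist r s.
Proof. by rewrite addr_ge0. Qed.

(* The layout fits in a q x 2q rectangle, so no wire is longer than 3q. *)
Lemma dist_le r s : dist r s <= 3 * q.
Proof.
have label_bounds x : (1 : R) <= (sigma x)%:R <= q.
  by have /andP[? ?] := sigma_range x; rewrite ler1n ler_nat; apply/andP.
have x_bounds t : 0 <= xcoord R sigma t <= q.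
  by have /andP[_ ?] := label_bounds t.2; rewrite ler0n.
have y_bounds t : 0 <= ycoord R sigma t <= 2 * q.
  by have /andP[? ?] := label_bounds t.1.2; rewrite /ycoord; case: t.1.1 => /=;
    apply/andP; split; lra.
have := dist_le_length (x_bounds r) (x_bounds s).
have := dist_le_length (y_bounds r) (y_bounds s).
by rewrite /wdist; lra.
Qed.

(* A router has at most q neighbours in its own group (same first label) and
   exactly q in the other one (one for each first label). *)
Lemma degree_le r : \sum_(s : router F) link r s <= 2 * q.
Proof.
have graph_bound (g : F -> F) (f : F -> F -> R) :
    (forall x y, f x y <= (y == g x)%:R) -> \sum_(x : F) \sum_(y : F) f x y <= q.
  move=> le_f; rewrite -(sum_graph_indicator R g).
  by apply: ler_sum => x _; apply: ler_sum => y _.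
case: r => -[[] a b]; rewrite sum_router big_bool /= /eps /= mulr_natl mulr2n.
- apply: lerD; last by apply: (graph_bound (fun x => a * x + b)) => x y.
  rewrite exchange_big /=; apply: (graph_bound (fun=> a)) => y x.
  by apply: ler_indicator => /andP[/eqP ->].
- apply: lerD; first apply: (graph_bound (fun x => b - x * a)) => x y.
    by apply: ler_indicator => /eqP ->; rewrite addrC addKr.
  rewrite exchange_big /=; apply: (graph_bound (fun=> a)) => y x.
  by apply: ler_indicator => /andP[/eqP ->].
Qed.

(* There are 2 q^2 routers, each with at most 2q links. *)
Lemma link_total_le : link_total <= 4 * q ^+ 3.
Proof.
apply: le_trans (_ : \sum_(r : router F) 2 * q <= _).
  by apply: ler_sum => r _; apply: degree_le.
rewrite sumr_const -[_ *+ _]mulr_natr !card_prod card_bool !natrM.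
by rewrite exprS expr2; lra.
Qed.

Lemma wire_total_le : wire_total <= 3 * q * link_total.
Proof.
rewrite /wire_total /link_total mulr_sumr; apply: ler_sum => r _.
rewrite mulr_sumr; apply: ler_sum => s _.
by rewrite mulrC ler_wpM2r ?link_ge0 ?dist_le.
Qed.

(* A group-0 router [0|a,b] is joined to [1|m, b - m a] for every m, at vertical
   distance at least |sigma a - sigma m|; by injectivity of sigma its wires have
   total length at least k (q - 2k). *)
Lemma row_wire_ge a b k :
  k%:R * (q - 2 * k%:R) <= \sum_(s : router F) link (false, a, b) s * dist (false, a, b) s.
Proof.
apply: le_trans (sum_dist_injective R (sigma a) k sigma_inj) _.
have terms_ge0 (t s : router F) : 0 <= link t s * dist t s.
  by rewrite mulr_ge0 ?link_ge0 ?dist_ge0.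
rewrite sum_router big_bool /=; apply: ler_wpDr.
  by apply: sumr_ge0 => x _; apply: sumr_ge0.
apply: ler_sum => m _; rewrite (bigD1 (b - m * a)) //=; apply: ler_wpDr.
  exact: sumr_ge0.
rewrite /eps /= subrKC eqxx mul1r /wdist /ycoord /= subr0 distrC.
exact: ler_wpDl (normr_ge0 _) (row_dist_ge _ _ _).
Qed.

(* Summing row_wire_ge over the q^2 routers of group 0. *)
Lemma wire_total_ge k : q ^+ 2 * (k%:R * (q - 2 * k%:R)) <= wire_total.
Proof.
rewrite /wire_total sum_router big_bool /=; apply: ler_wpDl.
  by do 3!(apply: sumr_ge0 => ? _); rewrite mulr_ge0 ?link_ge0 ?dist_ge0.
apply: le_trans (_ : \sum_(a : F) \sum_(b : F) k%:R * (q - 2 * k%:R) <= _).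
  set c := k%:R * _.
  by rewrite !sumr_const -mulrnA -[c *+ _]mulr_natr natrM mulrC expr2.
by apply: ler_sum => a _; apply: ler_sum => b _; apply: row_wire_ge.
Qed.

End SlimFlyWires.

Lemma link_cycles_bounds (R : archiRealFieldType) (H w : R) : 1 <= H -> 0 <= w ->
  2 * w / H <= 2 * (Num.ceil (w / H))%:~R + 3 <= 2 * w + 5.
Proof.
move=> H_ge1 w_ge0; have H_gt0 : 0 < H by apply: lt_le_trans H_ge1.
have w_div : w / H <= w by rewrite ler_pdivrMr // ler_peMr.
have /andP[ceil_gt ceil_ge] := ceil_itv (w / H).
by rewrite intrB in ceil_gt; rewrite -mulrA; apply/andP; split; lra.
Qed.

Section SlimFlyBuffers.
Variables (F : finFieldType) (xi : F) (R : realType) (sigma : F -> nat).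
Hypothesis sigma_range : forall x : F, (1 <= sigma x <= #|F|)%N.
Variables (b VC L H : R).
Hypotheses (b_gt0 : 0 < b) (VC_gt0 : 0 < VC) (L_gt0 : 0 < L) (H_ge1 : 1 <= H).

Local Notation q := (#|F|%:R : R).
Local Notation K := (b * VC / L).

Lemma edge_buffer_total_ge :
  2 * K / H * wire_total xi R sigma <= edge_buffer_total xi sigma b VC L H.
Proof.
have K_ge0 : 0 <= K by rewrite divr_ge0 ?mulr_ge0 // ltW.
rewrite /wire_total /edge_buffer_total mulr_sumr; apply: ler_sum => r _.
rewrite mulr_sumr; apply: ler_sum => s _.
have /andP[T_ge _] := link_cycles_bounds H_ge1 (dist_ge0 R sigma r s).
have -> : T_link sigma H r s * b * VC / L = T_link sigma H r s * K by rewrite !mulrA.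
have -> : 2 * K / H * (eps xi R r s * wdist R sigma r s) =
          eps xi R r s * (2 * wdist R sigma r s / H * K) by ring.
by rewrite ler_wpM2l ?link_ge0 // ler_wpM2r.
Qed.

Lemma edge_buffer_total_le :
  edge_buffer_total xi sigma b VC L H <= 11 * q * K * link_total xi R.
Proof.
have K_ge0 : 0 <= K by rewrite divr_ge0 ?mulr_ge0 // ltW.
have q_ge1 := card_ge1 F R.
rewrite /link_total /edge_buffer_total mulr_sumr; apply: ler_sum => r _.
rewrite mulr_sumr; apply: ler_sum => s _.
have /andP[_ T_le] := link_cycles_bounds H_ge1 (dist_ge0 R sigma r s).
have wire_le := dist_le R sigma_range r s.
rewrite -/(T_link sigma H r s) in T_le.
have -> : T_link sigma H r s * b * VC / L = T_link sigma H r s * K by rewrite !mulrA.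
rewrite [11 * q * K * _]mulrC ler_wpM2l ?link_ge0 // ler_wpM2r //; lra.
Qed.

End SlimFlyBuffers.

(* With q = 4k and |kappa| <= k, the N = 2 q^2 (3k + kappa) nodes number
   between q^3 and 2 q^3. *)
Lemma num_nodes_bounds (F : finFieldType) (R : realType) (kappa : int) (k : nat) :
  #|F| = (4 * k)%N -> (`|kappa| <= k)%N ->
  #|F|%:R ^+ 3 <= num_nodes F R kappa <= 2 * #|F|%:R ^+ 3.
Proof.
move=> card_F kappa_le.
rewrite /num_nodes /concentration /netradix cardsT !card_prod card_bool.
have -> : ((3 * #|F|) %/ 2 %/ 2)%N = (3 * k)%N by rewrite card_F; lia.
have : `|kappa%:~R : R| <= k%:R by rewrite -intr_norm -natr_absz ler_nat.
rewrite ler_norml card_F intrD /= !natrM => /andP[kappa_lb kappa_ub].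
have k_ge0 : 0 <= (k%:R : R) by [].
by apply/andP; split; nra.
Qed.

Lemma cube_root_cube (R : realType) (x : R) : 0 <= x -> (x ^+ 3) `^ 3%:R^-1 = x.
Proof.
by move=> x_ge0; rewrite -powR_mulrn // -powRrM mulfV ?powRr1 // pnatr_eq0.
Qed.

Lemma cube_root_bounds (R : realType) (x N : R) :
  0 <= x -> x ^+ 3 <= N <= 2 * x ^+ 3 -> x <= N `^ 3%:R^-1 <= 2 * x.
Proof.
move=> x_ge0 /andP[N_ge N_le].
have x3_ge0 : 0 <= x ^+ 3 by rewrite exprn_ge0.
have root_le (y : R) : 0 <= y -> y ^+ 3 <= N -> y <= N `^ 3%:R^-1.
  move=> y_ge0 yN; rewrite -{1}(cube_root_cube y_ge0).
  by apply: ge0_ler_powR; rewrite ?invr_ge0 ?nnegrE ?exprn_ge0 //; lra.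
rewrite root_le //=; have x2_ge0 : 0 <= 2 * x by lra.
rewrite -(cube_root_cube x2_ge0); apply: ge0_ler_powR;
  by rewrite ?invr_ge0 ?nnegrE ?exprn_ge0 //; lra.
Qed.

Section SlimFlyTheta.
Variables (F : finFieldType) (xi : F) (R : realType) (sigma : F -> nat).
Hypothesis sigma_inj : injective sigma.
Hypothesis sigma_range : forall x : F, (1 <= sigma x <= #|F|)%N.
Variables (kappa : int) (k : nat).
Hypothesis card_F : #|F| = (4 * k)%N.
Hypothesis kappa_le : (`|kappa| <= k)%N.

Local Notation q := (#|F|%:R : R).
Local Notation N := (num_nodes F R kappa).
Local Notation rho := (N `^ 3%:R^-1).

(* Taking k = q/4 in wire_total_ge, the total wire length is at least q^4/8. *)
Lemma wire_total_ge_quartic : q ^+ 4 / 8 <= wire_total xi R sigma.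
Proof.
apply: le_trans (wire_total_ge xi R sigma_inj k).
by rewrite card_F natrM; lra.
Qed.

Lemma rho_bounds : q <= rho <= 2 * q.
Proof. exact: cube_root_bounds (ler0n _ _) (num_nodes_bounds R card_F kappa_le). Qed.

(* M = W / D lies between (q^4/8) / (4 q^3) = q/32 and 3q. *)
Theorem avg_wire_length_theta :
  64^-1 * rho <= avg_wire_length xi R sigma <= 3 * rho.
Proof.
have q_ge1 := card_ge1 F R.
have W_ge := wire_total_ge_quartic; have W_le := wire_total_le xi R sigma_range.
have D_le := link_total_le xi R; have /andP[rho_ge rho_le] := rho_bounds.
have D_gt0 : 0 < link_total xi R by nra.
rewrite /avg_wire_length -/(wire_total xi R sigma) -/(link_total xi R).
by rewrite ler_pdivlMr // ler_pdivrMr //; apply/andP; split; nra.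
Qed.

(* Delta_eb lies between (2K/H) q^4/8 and 44 K q^4, while N rho lies in
   [q^4, 4 q^4]. *)
Theorem edge_buffer_theta (b VC L H : R) :
  0 < b -> 0 < VC -> 0 < L -> 1 <= H ->
  (b * VC / L) / (16 * H) * (N * rho) <= edge_buffer_total xi sigma b VC L H
  <= 44 * (b * VC / L) * (N * rho).
Proof.
move=> b_gt0 VC_gt0 L_gt0 H_ge1.
have K_gt0 : 0 < b * VC / L by rewrite divr_gt0 ?mulr_gt0.
have H_gt0 : 0 < H by apply: lt_le_trans H_ge1.
have q_ge1 := card_ge1 F R.
have /andP[N_ge N_le] := num_nodes_bounds R card_F kappa_le.
have /andP[rho_ge rho_le] := rho_bounds.
have q3_ge0 : 0 <= q ^+ 3 by rewrite exprn_ge0.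
have NR_ge : q ^+ 4 <= N * rho by rewrite exprSr; apply: ler_pM; lra.
have NR_le : N * rho <= 4 * q ^+ 4.
  have -> : 4 * q ^+ 4 = 2 * q ^+ 3 * (2 * q) by rewrite !exprS; ring.
  by apply: ler_pM; lra.
apply/andP; split.
- apply: le_trans _ (edge_buffer_total_ge xi sigma b_gt0 VC_gt0 L_gt0 H_ge1).
  have c_ge0 : 0 <= b * VC / L / (16 * H) by apply: divr_ge0; [exact: ltW | lra].
  have := ler_wpM2l c_ge0 NR_le.
  have c'_ge0 : 0 <= 2 * (b * VC / L) / H by apply: divr_ge0; lra.
  have := ler_wpM2l c'_ge0 wire_total_ge_quartic.
  have -> : b * VC / L / (16 * H) * (4 * q ^+ 4) = 2 * (b * VC / L) / H * (q ^+ 4 / 8).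
    by field; lra.
  lra.
- apply: le_trans (edge_buffer_total_le xi sigma_range b_gt0 VC_gt0 L_gt0 H_ge1) _.
  have K11_ge0 : 0 <= 11 * q * (b * VC / L) by apply: mulr_ge0; [lra | exact: ltW].
  have K44_ge0 : 0 <= 44 * (b * VC / L) by rewrite mulr_ge0 ?ltW.
  have := ler_wpM2l K11_ge0 (link_total_le xi R).
  have := ler_wpM2l K44_ge0 NR_ge.
  lra.
Qed.

End SlimFlyTheta.

Theorem mainTheorem1 (R : realType) (kappa : int) (b VC L H : R)
  (hb : 0 < b) (hVC : 0 < VC) (hL : 0 < L) (hH : 1 <= H)
  (F : nat -> finFieldType)
  (hF : forall m : nat, (2 <= m)%N -> #|F m| = (2 ^ m)%N)
  (xi : forall m : nat, F m)
  (hxi : forall m : nat, (2 <= m)%N -> primitive_elt (xi m))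
  (sigma : forall m : nat, F m -> nat)
  (hsig_inj : forall m : nat, (2 <= m)%N -> injective (sigma m))
  (hsig_rng : forall (m : nat) (x : F m), (2 <= m)%N -> (1 <= sigma m x <= 2 ^ m)%N) :
  (exists (c1 c2 : R) (m0 : nat), 0 < c1 /\ 0 < c2 /\
     forall m : nat, (m0 <= m)%N ->
       c1 * (num_nodes (F m) R kappa) `^ (3%:R^-1)
         <= avg_wire_length (xi m) R (sigma m)
       /\ avg_wire_length (xi m) R (sigma m)
         <= c2 * (num_nodes (F m) R kappa) `^ (3%:R^-1))
  /\
  (exists (c1 c2 : R) (m0 : nat), 0 < c1 /\ 0 < c2 /\
     forall m : nat, (m0 <= m)%N ->
       c1 * (num_nodes (F m) R kappa * (num_nodes (F m) R kappa) `^ (3%:R^-1))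
         <= edge_buffer_total (xi m) (sigma m) b VC L H
       /\ edge_buffer_total (xi m) (sigma m) b VC L H
         <= c2 * (num_nodes (F m) R kappa * (num_nodes (F m) R kappa) `^ (3%:R^-1))).
Proof.
(* For m >= |kappa| + 2 we have q = 2^m = 4k with k = 2^(m-2) >= |kappa|. *)
pose k m := (2 ^ (m - 2))%N.
have large m : (`|kappa| + 2 <= m)%N ->
    [/\ (2 <= m)%N, #|F m| = (4 * k m)%N & (`|kappa| <= k m)%N].
  move=> le_m; have le2_m : (2 <= m)%N by lia.
  split=> //; first by rewrite hF // -[4%N]/(2 ^ 2)%N -expnD subnKC.
  by apply: leq_trans (ltnW (ltn_expl (m - 2) (isT : (1 < 2)%N))); lia.
have range m : (2 <= m)%N -> forall x, (1 <= sigma m x <= #|F m|)%N.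
  by move=> le2_m x; rewrite hF //; exact: hsig_rng.
split.
- exists 64^-1, 3, (`|kappa| + 2)%N; do 2!split=> //.
  move=> m /large[le2_m card_F kappa_le]; apply/andP.
  exact (avg_wire_length_theta (xi m) R (hsig_inj m le2_m) (range m le2_m) card_F kappa_le).
- exists (b * VC / L / (16 * H)), (44 * (b * VC / L)), (`|kappa| + 2)%N.
  have K_gt0 : 0 < b * VC / L by rewrite divr_gt0 ?mulr_gt0.
  have H_gt0 : 0 < H by apply: lt_le_trans hH.
  split; first by rewrite divr_gt0 // mulr_gt0.
  split; first by rewrite mulr_gt0.
  move=> m /large[le2_m card_F kappa_le]; apply/andP.
  exact (edge_buffer_theta (xi m) (hsig_inj m le2_m) (range m le2_m) card_F kappa_le hb hVC hL hH).
Qed.
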